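(* There exist a finitely generated, residually finite group $G$ and an endomorphism $\Phi : G \to G$ such that for every $n \geq 0$, the restriction of $\Phi$ to $\Phi^n(G)$ is not injective. *)

(* abstract (possibly infinite) groups are given as an explicit
   record; finite quotients for residual finiteness are MathComp finGroupTypes. *)
From mathcomp Require Import all_boot all_fingroup.
From Stdlib Require List.

Set Implicit Arguments.
Unset Strict Implicit.
Unset Printing Implicit Defensive.

Record AbsGroup := {
  carrier :> Type;
  gmul : carrier -> carrier -> carrier;
  ginv : carrier -> carrier;
  gone : carrier;
  gmulA : forall x y z, gmul x (gmul y z) = gmul (gmul x y) z;
  gmul1 : forall x, gmul gone x = x;
  gmulV : forall x, gmul (ginv x) x = gone
}.

Inductive in_gen (G : AbsGroup) (S : list G) : G -> Prop :=
  | gen_base x : List.In x S -> in_gen S x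
  | gen_one : in_gen S (gone G)
  | gen_mul x y : in_gen S x -> in_gen S y -> in_gen S (gmul x y)
  | gen_inv x : in_gen S x -> in_gen S (ginv x).

Definition finitely_generated (G : AbsGroup) : Prop :=
  exists S : list G, forall x : G, in_gen S x.

Definition residually_finite (G : AbsGroup) : Prop :=
  forall g : G, g <> gone G ->
    exists (H : finGroupType) (f : G -> H),
      (forall x y : G, f (gmul x y) = (f x * f y)%g) /\ f g <> 1%g.

Definition is_endomorphism (G : AbsGroup) (phi : G -> G) : Prop :=
  forall x y : G, phi (gmul x y) = gmul (phi x) (phi y).

Definition image_iter (G : AbsGroup) (phi : G -> G) (n : nat) (y : G) : Prop :=
  exists x : G, y = iter n phi x.

From mathcomp Require Import all_boot all_fingroup.
From HB Require Import structures.
From mathcomp Require Import zmodp cyclic.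
From Stdlib Require Import FunctionalExtensionality ProofIrrelevance Classical.

(* Take for G the subgroup generated by t, a, c of the product over M of the
   finite groups Z/2 wr (Z/2 wr Z/(M+1)), where t, a generate the inner
   lamplighter group L and c is the lamp at the origin; G is residually finite as a
   subgroup of a product of finite groups.  Phi fixes t and a and acts on lamp
   configurations F : L -> F_2 by right convolution with t + ta, so that
   Phi(c) = c^(t^-1) c^((ta)^-1) lies in G.
   For the dipole k_n = c c^(a_n^-1), a_n = t^(n+1) a t^-(n+1), the
   configuration of k_n is invariant under toggling the lamp at distance n+1 from
   the lamplighter, and each convolution step lowers that distance, so
   Phi^(n+1)(k_n) = 1.  But in the coordinate M = n+1, where t^0, ..., t^(n+1)
   are distinct, Phi^n(k_n) <> 1.  Thus Phi^n(k_n) and 1 are distinct points of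
   Phi^n(G) with the same image. *)

Set Implicit Arguments.
Unset Strict Implicit.
Unset Printing Implicit Defensive.

Section AbsGroupTheory.
Variable G : AbsGroup.
Implicit Types x y z : G.

Lemma gmulVr x : gmul x (ginv x) = gone G.
Proof.
rewrite -{1}(gmul1 (gmul x (ginv x))) -{1}(gmulV (ginv x)) -gmulA.
by rewrite [gmul (ginv x) _]gmulA gmulV gmul1 gmulV.
Qed.

Lemma gmul1r x : gmul x (gone G) = x.
Proof. by rewrite -(gmulV x) gmulA gmulVr gmul1. Qed.

Lemma gmulI x y z : gmul x y = gmul x z -> y = z.
Proof. by move=> /(congr1 (gmul (ginv x))); rewrite !gmulA gmulV !gmul1. Qed.

Definition gconj x y := gmul (gmul y x) (ginv y).

Lemma in_gen_gconj (S : list G) x y : in_gen S x -> in_gen S y -> in_gen S (gconj x y).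
Proof. by move=> Sx Sy; do 2?apply: gen_mul => //; apply: gen_inv. Qed.

Variable phi : G -> G.
Hypothesis phiM : is_endomorphism phi.

Lemma endomorph1 : phi (gone G) = gone G.
Proof. by apply: (@gmulI (phi (gone G))); rewrite -phiM gmul1 gmul1r. Qed.

Lemma endomorphV x : phi (ginv x) = ginv (phi x).
Proof. by apply: (@gmulI (phi x)); rewrite -phiM !gmulVr endomorph1. Qed.

Lemma iter_endomorph1 n : iter n phi (gone G) = gone G.
Proof. by elim: n => //= n ->; exact: endomorph1. Qed.

End AbsGroupTheory.

Section GeneratedSubgroup.
Variables (G : AbsGroup) (S : list G).

Definition gen_elt := {x : G | in_gen S x}.

Lemma gen_elt_inj (x y : gen_elt) : sval x = sval y -> x = y.
Proof. by case: x y => [x px] [y py] /= exy; apply: subset_eq_compat. Qed.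

Definition gen_elt_mul (x y : gen_elt) : gen_elt :=
  exist _ (gmul (sval x) (sval y)) (gen_mul (svalP x) (svalP y)).
Definition gen_elt_inv (x : gen_elt) : gen_elt :=
  exist _ (ginv (sval x)) (gen_inv (svalP x)).
Definition gen_elt_one : gen_elt := exist _ (gone G) (gen_one S).

Lemma gen_elt_mulA x y z :
  gen_elt_mul x (gen_elt_mul y z) = gen_elt_mul (gen_elt_mul x y) z.
Proof. by apply: gen_elt_inj; rewrite /= gmulA. Qed.

Lemma gen_elt_mul1 x : gen_elt_mul gen_elt_one x = x.
Proof. by apply: gen_elt_inj; rewrite /= gmul1. Qed.

Lemma gen_elt_mulV x : gen_elt_mul (gen_elt_inv x) x = gen_elt_one.
Proof. by apply: gen_elt_inj; rewrite /= gmulV. Qed.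

Definition generated : AbsGroup :=
  Build_AbsGroup gen_elt_mulA gen_elt_mul1 gen_elt_mulV.

Lemma lift_generators S' : (forall s, List.In s S' -> List.In s S) ->
  exists T : list generated, List.map sval T = S'.
Proof.
elim: S' => [|s S' IH] sub_S; first by exists nil.
have [|T <-] := IH; first by move=> x x_S'; apply: sub_S; right.
by exists (exist _ s (gen_base (sub_S s (or_introl erefl))) :: T).
Qed.

Lemma generated_finitely_generated : finitely_generated generated.
Proof.
have [T defS] := @lift_generators S (fun _ => id); exists T.
suff gen_T x (Sx : in_gen S x) : forall px, @in_gen generated T (exist _ x px).
  by case=> x px; apply: gen_T.
elim: Sx => {x} [x Sx| |x y Sx IHx Sy IHy|x Sx IHx] px.
- rewrite -defS in Sx; have [[y py] [/= yx Ty]] := proj1 (List.in_map_iff _ _ _) Sx.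
  have -> : exist _ x px = exist _ y py by apply: gen_elt_inj.
  exact: gen_base.
- have -> : exist _ (gone G) px = gone generated by apply: gen_elt_inj.
  exact: gen_one.
- have -> : exist _ _ px = gmul (exist _ x Sx : generated) (exist _ y Sy).
    exact: gen_elt_inj.
  exact: gen_mul (IHx Sx) (IHy Sy).
- have -> : exist _ _ px = ginv (exist _ x Sx : generated) by apply: gen_elt_inj.
  exact: gen_inv (IHx Sx).
Qed.

Lemma generated_residually_finite :
  residually_finite G -> residually_finite generated.
Proof.
move=> rfG g g_neq1.
have [H [f [fM fg]]] := rfG (sval g) (fun e => g_neq1 (@gen_elt_inj g gen_elt_one e)).
by exists H, (fun x : generated => f (sval x)); split => // x y; apply: fM.
Qed.

Variable phi : G -> G.
Hypotheses (phiM : is_endomorphism phi)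
           (phiS : forall s, List.In s S -> in_gen S (phi s)).

Lemma in_gen_endomorph x : in_gen S x -> in_gen S (phi x).
Proof.
elim=> {x} [s /phiS //| |x y _ Sx _ Sy|x _ Sx].
- by rewrite endomorph1 //; apply: gen_one.
- by rewrite phiM; apply: gen_mul.
- by rewrite endomorphV //; apply: gen_inv.
Qed.

Definition restrict_endo (x : generated) : generated :=
  exist _ (phi (sval x)) (in_gen_endomorph (svalP x)).

Lemma restrict_endo_endomorphism : is_endomorphism restrict_endo.
Proof. by move=> x y; apply: gen_elt_inj; rewrite /= phiM. Qed.

Lemma sval_iter_restrict n x : sval (iter n restrict_endo x) = iter n phi (sval x).
Proof. by elim: n => //= n ->. Qed.

End GeneratedSubgroup.

Section ProductGroup.
Variables (I : Type) (G : I -> finGroupType).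
Local Open Scope group_scope.

Definition prod_mul (x y : forall i, G i) i := x i * y i.
Definition prod_inv (x : forall i, G i) i := (x i)^-1.
Definition prod_one : forall i, G i := fun=> 1.

Lemma prod_mulA x y z : prod_mul x (prod_mul y z) = prod_mul (prod_mul x y) z.
Proof. by apply: functional_extensionality_dep => i; apply: mulgA. Qed.

Lemma prod_mul1 x : prod_mul prod_one x = x.
Proof. by apply: functional_extensionality_dep => i; apply: mul1g. Qed.

Lemma prod_mulV x : prod_mul (prod_inv x) x = prod_one.
Proof. by apply: functional_extensionality_dep => i; apply: mulVg. Qed.

Definition prod_group : AbsGroup := Build_AbsGroup prod_mulA prod_mul1 prod_mulV.

Lemma prod_group_residually_finite : residually_finite prod_group.
Proof.
move=> g g_neq1; have [i gi_neq1] : exists i, g i <> 1.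
  by apply: not_all_ex_not => g1; apply/g_neq1/functional_extensionality_dep.
by exists (G i), (fun x : prod_group => x i).
Qed.

Lemma in_gen_expg (S : list prod_group) (x : prod_group) n :
  in_gen S x -> in_gen S (fun i => x i ^+ n).
Proof.
move=> Sx; elim: n => [|n IHn]; first exact: gen_one.
have -> : (fun i => x i ^+ n.+1) = gmul x (fun i => x i ^+ n).
  by apply: functional_extensionality_dep => i; rewrite expgS.
exact: gen_mul.
Qed.

End ProductGroup.

Section Wreath.
Variable H : finGroupType.
Implicit Types (f g : {ffun H -> bool}) (h k p q : H).
Local Open Scope group_scope.

(* [(f, h)] is the lamp configuration [f] with the lamplighter at [h]; [H] acts
   on configurations on the left, [(h . f) k = f (h^-1 k)]. *)
Definition wreath := ({ffun H -> bool} * H)%type.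
HB.instance Definition _ := Finite.on wreath.

Definition lamps_off : {ffun H -> bool} := [ffun=> false].

Definition wr_mul (x y : wreath) : wreath :=
  ([ffun h => x.1 h (+) y.1 (x.2^-1 * h)], x.2 * y.2).
Definition wr_inv (x : wreath) : wreath := ([ffun h => x.1 (x.2 * h)], x.2^-1).
Definition wr_one : wreath := (lamps_off, 1).

Lemma wr_mulA : associative wr_mul.
Proof.
move=> [f1 h1] [f2 h2] [f3 h3]; congr pair; last exact: mulgA.
by apply/ffunP => h; rewrite !ffunE /= addbA invMg mulgA.
Qed.

Lemma wr_mul1 : left_id wr_one wr_mul.
Proof.
move=> [f h]; congr pair; last exact: mul1g.
by apply/ffunP => k; rewrite !ffunE /= invg1 mul1g.
Qed.

Lemma wr_mulV : left_inverse wr_one wr_inv wr_mul.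
Proof.
move=> [f h]; congr pair; last exact: mulVg.
by apply/ffunP => k; rewrite !ffunE /= invgK addbb.
Qed.

HB.instance Definition _ := Finite_isGroup.Build wreath wr_mulA wr_mul1 wr_mulV.

Definition delta p : {ffun H -> bool} := [ffun h => h == p].
Definition toggle f p : {ffun H -> bool} := [ffun h => f h (+) (h == p)].

Lemma toggleK p : involutive (toggle^~ p).
Proof. by move=> f; apply/ffunP => h; rewrite !ffunE -addbA addbb addbF. Qed.

Lemma toggleC f p q : toggle (toggle f p) q = toggle (toggle f q) p.
Proof. by apply/ffunP => h; rewrite !ffunE -!addbA (addbC (h == p)). Qed.

Lemma toggle_off p : toggle lamps_off p = delta p.
Proof. by apply/ffunP => h; rewrite !ffunE. Qed.

Lemma toggle_delta p : toggle (delta p) p = lamps_off.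
Proof. by apply/ffunP => h; rewrite !ffunE addbb. Qed.

Definition lit_in (s : seq H) f := [forall h, f h ==> (h \in s)].

Lemma lit_in_toggle s q f : q \notin s ->
  lit_in s f (+) lit_in s (toggle f q) = lit_in (rcons s q) f.
Proof.
move=> q_notin_s; have lit_q g : g q -> lit_in s g = false.
  by move=> gq; apply/forallP => /(_ q); rewrite gq (negbTE q_notin_s).
case fq: (f q).
- rewrite lit_q //; apply: eq_forallb => h; rewrite ffunE mem_rcons inE.
  by case: eqP => [->|_]; rewrite ?fq ?implybT ?addbF.
- rewrite (lit_q (toggle f q)) ?ffunE ?fq ?eqxx // addbF.
  by apply: eq_forallb => h; rewrite mem_rcons inE; case: eqP => [->|]; rewrite ?fq.
Qed.

Definition wr_base f : wreath := (f, 1).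
Definition wr_top h : wreath := (lamps_off, h).

Lemma wr_baseM f g : wr_base f * wr_base g = wr_base [ffun h => f h (+) g h].
Proof.
congr pair; last exact: mulg1.
by apply/ffunP => h; rewrite !ffunE /= invg1 mul1g.
Qed.

Lemma wr_mul_top f h k : ((f, h) : wreath) * wr_top k = (f, h * k).
Proof. by congr pair; apply/ffunP => p; rewrite !ffunE addbF. Qed.

Lemma wr_mul_delta1 f h : ((f, h) : wreath) * wr_base (delta 1) = (toggle f h, h).
Proof.
congr pair; last exact: mulg1.
by apply/ffunP => k; rewrite !ffunE /= (can2_eq (mulKVg h) (mulKg h)) mulg1.
Qed.

Lemma wr_topM h k : wr_top h * wr_top k = wr_top (h * k).
Proof. exact: wr_mul_top. Qed.

Lemma wr_topV h : (wr_top h)^-1 = wr_top h^-1.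
Proof. by congr pair; apply/ffunP => k; rewrite !ffunE. Qed.

Lemma wr_top_conj h k : wr_top h * wr_top k * (wr_top h)^-1 = wr_top (h * k * h^-1).
Proof. by rewrite wr_topV !wr_topM. Qed.

Lemma wr_topX h n : wr_top h ^+ n = wr_top (h ^+ n).
Proof. by elim: n => // n IHn; rewrite !expgS IHn wr_topM. Qed.

Lemma wr_delta1V : (wr_base (delta 1))^-1 = wr_base (delta 1).
Proof. by congr pair; [apply/ffunP => h; rewrite !ffunE mul1g | exact: invg1]. Qed.

Lemma wr_delta1_conj h : wr_top h * wr_base (delta 1) * (wr_top h)^-1 = wr_base (delta h).
Proof. by rewrite wr_mul_delta1 wr_topV wr_mul_top mulgV toggle_off. Qed.

(* Right convolution with [p + q] in F_2[H]: it commutes with the left action of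
   [H], which is why [wr_conv] is an endomorphism. *)
Definition conv p q f : {ffun H -> bool} := [ffun h => f (h * p^-1) (+) f (h * q^-1)].
Definition wr_conv p q (x : wreath) : wreath := (conv p q x.1, x.2).

Lemma wr_convM p q : {morph wr_conv p q : x y / x * y}.
Proof.
move=> [f1 h1] [f2 h2]; congr pair.
by apply/ffunP => h; rewrite !ffunE /= !mulgA -!addbA (addbCA (f2 _)).
Qed.

Lemma wr_conv_top p q h : wr_conv p q (wr_top h) = wr_top h.
Proof. by congr pair; apply/ffunP => k; rewrite !ffunE. Qed.

Lemma wr_conv_delta1 p q : wr_conv p q (wr_base (delta 1)) =
  wr_top p * wr_base (delta 1) * (wr_top p)^-1 * (wr_top q * wr_base (delta 1) * (wr_top q)^-1).
Proof.
rewrite !wr_delta1_conj wr_baseM; congr pair.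
by apply/ffunP => h; rewrite !ffunE -!eq_mulgV1.
Qed.

Lemma iter_wr_conv p q n f h :
  iter n (wr_conv p q) (f, h) = (iter n (conv p q) f, h).
Proof. by elim: n => //= n ->. Qed.

End Wreath.

Section LampConvolution.
Variables (K : finGroupType) (g0 : K).
Local Open Scope group_scope.
Local Notation L := (wreath K).
Local Notation rho := (conv (wr_top g0) (wr_top g0 * wr_base (delta 1))).

Lemma conv_lampE (F : {ffun L -> bool}) b k :
  rho F ((b, k) : L) = F (b, k * g0^-1) (+) F (toggle b k, k * g0^-1).
Proof.
by rewrite ffunE invMg wr_delta1V wr_topV mulgA wr_mul_delta1 !wr_mul_top.
Qed.

Definition toggle_invariant d (F : {ffun L -> bool}) :=
  forall b k, F (toggle b (k * g0 ^+ d), k) = F (b, k).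

Lemma toggle_invariant_conv d F :
  toggle_invariant d.+1 F -> toggle_invariant d (rho F).
Proof.
move=> FP b k; rewrite !conv_lampE.
have -> : k * g0 ^+ d = k * g0^-1 * g0 ^+ d.+1 by rewrite expgS mulgA mulgKV.
by rewrite FP toggleC FP.
Qed.

Lemma toggle_invariant1_conv F : toggle_invariant 1 F -> rho F = lamps_off L.
Proof.
move=> FP; apply/ffunP => -[b k]; rewrite conv_lampE ffunE.
by move: (FP b (k * g0^-1)); rewrite expg1 mulgKV => ->; rewrite addbb.
Qed.

Lemma iter_conv_eq0 d F : toggle_invariant d.+1 F -> iter d.+1 rho F = lamps_off L.
Proof.
elim: d F => [|d IHd] F FP; first exact: toggle_invariant1_conv.
by rewrite iterSr IHd //; apply: toggle_invariant_conv.
Qed.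

Definition dipole n : {ffun L -> bool} :=
  [ffun x => (x == 1) (+) (x == wr_base (delta (g0 ^+ n.+1)))].

Lemma dipole_toggle_invariant n : toggle_invariant n.+1 (dipole n).
Proof.
move=> b k; rewrite !ffunE !xpair_eqE.
case: (eqVneq k 1) => [->|_]; last by rewrite !andbF.
by rewrite !andbT mul1g !(can2_eq (toggleK _) (toggleK _)) toggle_off toggle_delta addbC.
Qed.

Definition window i : seq K := [seq g0 ^+ j | j <- iota 1 i].

Lemma windowS i : window i.+1 = rcons (window i) (g0 ^+ i.+1).
Proof. by rewrite /window -[i.+1]addn1 iotaD map_cat cats1 add1n addn1. Qed.

Section DipoleOrbit.
Variable n : nat.
Hypothesis n_lt_order : n.+1 < #[g0].

Lemma expg_notin_window i j : i < j <= n.+1 -> g0 ^+ j \notin window i.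
Proof.
case/andP=> lt_ij le_jn; apply/mapP => -[m]; rewrite mem_iota add1n ltnS => /andP[_ le_mi].
have lt_mj : m < j := leq_ltn_trans le_mi lt_ij.
have lt_jo : j < #[g0] := leq_ltn_trans le_jn n_lt_order.
move/eqP; rewrite eq_expg_mod_order !modn_small ?(ltn_trans lt_mj) //.
by rewrite gtn_eqF.
Qed.

(* [iter i rho (dipole n) (b, g0 ^+ i)] counts mod 2 the subsets of [window i]
   whose indicator is [b] or [toggle b (g0 ^+ n.+1)]. *)
Definition dipole_iter i : {ffun L -> bool} :=
  [ffun x => (x.2 == g0 ^+ i) &&
     (lit_in (window i) x.1 (+) lit_in (window i) (toggle x.1 (g0 ^+ n.+1)))].

Lemma dipole_iter0 : dipole_iter 0 = dipole n.
Proof.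
have lit_nil c : lit_in (window 0) c = (c == lamps_off K).
  apply/forallP/eqP => [c_in|-> h]; last by rewrite ffunE.
  by apply/ffunP => h; rewrite ffunE; move: (c_in h); case: (c h).
apply/ffunP => -[b k]; rewrite !ffunE !xpair_eqE !lit_nil.
case: (eqVneq k 1) => [->|_]; last by rewrite !andbF.
by rewrite !andbT (can2_eq (toggleK _) (toggleK _)) toggle_off.
Qed.

Lemma conv_dipole_iter i : i < n -> rho (dipole_iter i) = dipole_iter i.+1.
Proof.
move=> lt_in; apply/ffunP => -[b k]; rewrite conv_lampE !ffunE /=.
rewrite (can2_eq (mulgKV g0) (mulgK g0)) -expgSr.
case: (eqVneq k (g0 ^+ i.+1)) => [->|] //=.
have notin_i : g0 ^+ i.+1 \notin window i.
  by apply: expg_notin_window; rewrite ltnSn ltnS ltnW.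
rewrite [toggle (toggle b _) _]toggleC addbACA (lit_in_toggle b notin_i).
by rewrite (lit_in_toggle (toggle b _) notin_i) -windowS.
Qed.

Lemma iter_conv_dipole i : i <= n -> iter i rho (dipole n) = dipole_iter i.
Proof.
elim: i => [|i IHi] le_in; first by rewrite dipole_iter0.
by rewrite iterS IHi ?conv_dipole_iter // ltnW.
Qed.

Lemma iter_conv_dipole_neq0 : iter n rho (dipole n) (wr_top (g0 ^+ n)) = true.
Proof.
rewrite iter_conv_dipole // ffunE /= eqxx toggle_off /=.
have -> : lit_in (window n) (lamps_off K) by apply/forallP => h; rewrite ffunE.
suff /negbTE-> : ~~ lit_in (window n) (delta (g0 ^+ n.+1)) by [].
apply/forallP => /(_ (g0 ^+ n.+1)); rewrite ffunE eqxx /=.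
by apply/negP/expg_notin_window; rewrite ltnSn /=.
Qed.

End DipoleOrbit.

Lemma iter_conv_dipole_eq0 n : iter n.+1 rho (dipole n) = lamps_off L.
Proof. exact/iter_conv_eq0/dipole_toggle_invariant. Qed.

End LampConvolution.

Section DoubleLamplighter.
Local Open Scope group_scope.

Definition lamp2 (M : nat) : finGroupType := wreath (wreath 'I_M.+1).
Definition lamp2_prod := prod_group lamp2.

Definition gen_t : lamp2_prod := fun M => wr_top (wr_top Zp1).
Definition gen_a : lamp2_prod := fun M => wr_top (wr_base (delta 1)).
Definition gen_c : lamp2_prod := fun M => wr_base (delta 1).
Definition generators : list lamp2_prod := [:: gen_t; gen_a; gen_c].

Definition coord_conv M : lamp2 M -> lamp2 M :=
  wr_conv (wr_top Zp1) (wr_top Zp1 * wr_base (delta 1)).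
Definition Phi (x : lamp2_prod) : lamp2_prod := fun M => coord_conv (x M).

Lemma Phi_endomorphism : is_endomorphism Phi.
Proof. by move=> x y; apply: functional_extensionality_dep => M; apply: wr_convM. Qed.

Lemma generators_in_gen :
  [/\ in_gen generators gen_t, in_gen generators gen_a & in_gen generators gen_c].
Proof. by split; apply: gen_base; [left | right; left | right; right; left]. Qed.

Lemma Phi_generators s : List.In s generators -> in_gen generators (Phi s).
Proof.
have [t_in a_in c_in] := generators_in_gen.
have Phi_top (h : forall M, wreath 'I_M.+1) :
    Phi (fun M => wr_top (h M)) = (fun M => wr_top (h M)).
  by apply: functional_extensionality_dep => M; apply: wr_conv_top.
case=> [<-|[<-|[<-|[]]]]; [by rewrite /gen_t Phi_top | by rewrite /gen_a Phi_top |].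
have -> : Phi gen_c = gmul (gconj gen_c gen_t) (gconj gen_c (gmul gen_t gen_a)).
  apply: functional_extensionality_dep => M.
  by rewrite /Phi /coord_conv wr_conv_delta1 -wr_topM.
by apply: gen_mul; apply: in_gen_gconj => //; apply: gen_mul.
Qed.

Definition dipole_elt n : lamp2_prod :=
  gmul gen_c (gconj gen_c (gconj gen_a (fun M => gen_t M ^+ n.+1))).

Lemma in_gen_dipole_elt n : in_gen generators (dipole_elt n).
Proof.
have [t_in a_in c_in] := generators_in_gen.
by apply: gen_mul => //; do 2!apply: in_gen_gconj => //; apply: in_gen_expg.
Qed.

Lemma dipole_eltE n M : dipole_elt n M = wr_base (dipole Zp1 n).
Proof.
rewrite /dipole_elt /= /prod_mul /prod_inv /gen_t /gen_a /gen_c /=.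
rewrite !wr_topX wr_top_conj !wr_delta1_conj wr_baseM; congr pair.
by apply/ffunP => x; rewrite !ffunE.
Qed.

Lemma iter_Phi m x M : iter m Phi x M = iter m (@coord_conv M) (x M).
Proof. by elim: m => //= m IHm; rewrite /Phi IHm. Qed.

Lemma iter_Phi_dipole_eq1 n : iter n.+1 Phi (dipole_elt n) = gone lamp2_prod.
Proof.
apply: functional_extensionality_dep => M.
by rewrite iter_Phi dipole_eltE iter_wr_conv iter_conv_dipole_eq0.
Qed.

Lemma iter_Phi_dipole_neq1 n : iter n Phi (dipole_elt n) n.+1 <> 1.
Proof.
rewrite iter_Phi dipole_eltE iter_wr_conv => -[dipole_off].
have lt_n_order : n.+1 < #[@Zp1 n.+1] by rewrite order_Zp1.
by have := iter_conv_dipole_neq0 lt_n_order; rewrite dipole_off ffunE.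
Qed.

End DoubleLamplighter.

Theorem theorem2 :
  exists (G : AbsGroup) (phi : G -> G),
    finitely_generated G /\ residually_finite G /\ is_endomorphism phi /\
    forall n : nat,
      exists a b : G, image_iter phi n a /\ image_iter phi n b /\
                      a <> b /\ phi a = phi b.
Proof.
pose phi := restrict_endo Phi_endomorphism Phi_generators.
have phiM : is_endomorphism phi := restrict_endo_endomorphism _ _.
exists (generated generators), phi.
split; first exact: generated_finitely_generated.
split; first exact/generated_residually_finite/prod_group_residually_finite.
split=> // n; pose k : generated generators := exist _ _ (in_gen_dipole_elt n).
exists (iter n phi k), (gone _).
split; first by exists k.
split; first by exists (gone _); rewrite iter_endomorph1.
split.
- move/(congr1 (fun x : generated generators => sval x n.+1)).
  by rewrite sval_iter_restrict; apply: iter_Phi_dipole_neq1.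
- rewrite endomorph1 // -iterS; apply: gen_elt_inj.
  by rewrite sval_iter_restrict iter_Phi_dipole_eq1.
Qed.
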